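(* Let $\omega_\xi$ be a pure translation-invariant stabilizer state on the spin-$1/2$ chain whose stabilizer generator $W(\xi)$ has length $2n+1$. Then with respect to any bipartite cut of the chain into a left and a right half-chain, $\omega_\xi$ contains exactly $n$ maximally entangled qubit pairs, i.e. $E(\omega_\xi)=\frac{\mathrm{length}(\xi)-1}{2}=n$.
   Context: $\mathcal{P}$ = Laurent polynomials in $u$ over $\mathbb{Z}_2$, $\mathcal{R}$ its palindromes. For $\xi=(\xi_+,\xi_-)\in\mathcal{P}^2$, $W(\xi)=\bigotimes_x W(\xi_+(x),\xi_-(x))$ on the chain $\bigotimes_{x\in\mathbb{Z}}M_2$ (coefficient of $u^x$ at site $x$), with $W(0,0)=\mathbb{1},W(1,0)=\sigma_1,W(0,1)=\sigma_3,W(1,1)=-i\sigma_2$. For $\xi$ reflection invariant ($\xi_\pm\in\mathcal{R}$) with $\gcd(\xi_+,\xi_-)=1$, the pure translation-invariant stabilizer state $\omega_\xi$ is the unique state with $\omega_\xi(A)=1$ for all $A$ in the stabilizer group $\mathcal{S}$ generated by all lattice translates of $W(\xi)$. The length of $\xi$ is the number of sites between the leftmost and rightmost non-identity factor of $W(\xi)$, inclusive (it equals $2\deg\xi+1$, $\deg\xi$ the highest exponent occurring in $\xi_\pm$). For a cut into half-chains $A$ (left) and $B$ (right), $E(\omega_\xi)$, the number of maximally entangled qubit pairs, is the number of pairs $(W(\eta^i),W(\zeta^i))$ of elements of $\mathcal{S}$ supported on both sides of the cut whose restrictions to $A$ anticommute within each pair, commute between different pairs, and commute with every element of $\mathcal{S}$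 supported entirely in $A$ (each such pair behaves as a pair $(\sigma_1^A\otimes\sigma_1^B,\sigma_3^A\otimes\sigma_3^B)$ stabilizing a Bell pair), taken maximal. *)

From HB Require Import structures.
From mathcomp Require Import all_boot all_order all_algebra.
Set Implicit Arguments. Unset Strict Implicit. Unset Printing Implicit Defensive.
Import Order.TTheory GRing.Theory Num.Theory.
Local Open Scope ring_scope.

(** Laurent polynomials over Z_2: [Laurent p k] represents u^{-k} * p(u). *)
Record laurent := Laurent { lpoly : {poly 'F_2}; lshift : nat }.

Definition coefL (f : laurent) (x : int) : 'F_2 :=
  if (0 <= x + (lshift f)%:Z) then (lpoly f)`_(absz (x + (lshift f)%:Z)) else 0.

Definition lmul (f g : laurent) : laurent :=
  Laurent (lpoly f * lpoly g) (lshift f + lshift g).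

Definition lone : laurent := Laurent 1 0.

Definition leq_L (f g : laurent) : Prop := forall x, coefL f x = coefL g x.

Definition ldvd (d f : laurent) : Prop := exists g, leq_L f (lmul d g).
Definition lunit (d : laurent) : Prop := exists g, leq_L (lmul d g) lone.
Definition lcoprime (f g : laurent) : Prop :=
  forall d, ldvd d f -> ldvd d g -> lunit d.

Definition palindrome (f : laurent) : Prop := forall x, coefL f x = coefL f (- x).

(** Pauli labels xi = (xi_+, xi_-) in P^2 *)
Definition label := (laurent * laurent)%type.

(** W(xi) has a non-identity tensor factor at site x *)
Definition nonid (xi : label) (x : int) : Prop :=
  coefL xi.1 x != 0 \/ coefL xi.2 x != 0.

Definition has_length (xi : label) (m : nat) : Prop :=
  exists lo hi : int, [/\ nonid xi lo, nonid xi hi,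
    (forall x, nonid xi x -> lo <= x <= hi) & hi - lo + 1 = m%:Z].

(** W(eta) is (up to a phase) an element of the stabilizer group generated
    by all lattice translates of W(xi): eta = f * xi for some Laurent f *)
Definition inS (xi eta : label) : Prop :=
  exists f, leq_L eta.1 (lmul f xi.1) /\ leq_L eta.2 (lmul f xi.2).

(** cut between sites c-1 and c: A = {x < c}, B = {x >= c} *)
Definition supp_both (c : int) (eta : label) : Prop :=
  (exists x, x < c /\ nonid eta x) /\ (exists y, c <= y /\ nonid eta y).

Definition supp_in_A (c : int) (eta : label) : Prop :=
  forall x, nonid eta x -> x < c.

(** symplectic form of the restrictions to A (sites x < c):
    0 = restrictions commute, 1 = anticommute.  Sum over x in [-M, c) where
    M bounds all shifts, so that all nonzero terms are included. *)
Definition sigmaA (c : int) (eta zeta : label) : 'F_2 :=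
  let M := maxn (maxn (lshift eta.1) (lshift eta.2))
                (maxn (lshift zeta.1) (lshift zeta.2)) in
  let N := if (0 <= c + M%:Z) then absz (c + M%:Z) else 0%N in
  \sum_(i < N)
    (coefL eta.1 (i%:Z - M%:Z) * coefL zeta.2 (i%:Z - M%:Z)
     + coefL eta.2 (i%:Z - M%:Z) * coefL zeta.1 (i%:Z - M%:Z)).

(** a family of k pairs (W(eta^i), W(zeta^i)) of maximally entangled
    qubit pairs across the cut c, as in the definition of E(omega_xi) *)
Definition bell_family (xi : label) (c : int) (k : nat)
    (eta zeta : 'I_k -> label) : Prop :=
  [/\ (forall i, inS xi (eta i) /\ inS xi (zeta i)),
      (forall i, supp_both c (eta i) /\ supp_both c (zeta i)),
      (forall i, sigmaA c (eta i) (zeta i) = 1),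
      (forall i j, i != j ->
         [/\ sigmaA c (eta i) (eta j) = 0, sigmaA c (eta i) (zeta j) = 0
           & sigmaA c (zeta i) (zeta j) = 0])
    & (forall i theta, inS xi theta -> supp_in_A c theta ->
         sigmaA c (eta i) theta = 0 /\ sigmaA c (zeta i) theta = 0)].

Definition entanglement_is (xi : label) (c : int) (m : nat) : Prop :=
  (exists eta zeta : 'I_m -> label, bell_family xi c eta zeta) /\
  (forall k (eta zeta : 'I_k -> label), bell_family xi c eta zeta -> (k <= m)%N).

(* Every element of the stabilizer group is W(f xi) for a Laurent polynomial f, and
   the commutation form of W(f xi), W(g xi) restricted to the left half-chain is
   sum_(j,k) f_j g_k Omega(j, k), where Omega(j, k) is the restricted form of the
   j-th and k-th translates of W(xi).  As xi is palindromic all translates of W(xi)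
   commute, so Omega(j, k) vanishes unless both translates straddle the cut; for a
   generator of length 2n + 1 this leaves an alternating 2n x 2n matrix.  Coprimality
   of xi_+ and xi_- makes it nondegenerate.  Its symplectic basis gives n Bell pairs,
   and conversely k Bell pairs give k hyperbolic pairs for it, so 2k <= 2n. *)

From HB Require Import structures.
From mathcomp Require Import all_boot all_order all_algebra.
From mathcomp Require Import zify ring.
Set Implicit Arguments. Unset Strict Implicit. Unset Printing Implicit Defensive.
Import Order.TTheory GRing.Theory Num.Theory.
Local Open Scope ring_scope.

Lemma F2_addrr (a : 'F_2) : a + a = 0.
Proof. exact/addrr_pchar2/pchar_Fp. Qed.

Lemma F2_neq0 (a : 'F_2) : a != 0 -> a = 1.
Proof. by case: a => [[|[|m]] hm] //= _; apply/val_inj. Qed.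

Lemma F2_addr_eq0 (a b : 'F_2) : a + b = 0 -> a = b.
Proof. by move=> e; rewrite -[a]addr0 -(F2_addrr b) addrA e add0r. Qed.

Lemma big_uniq_supp (T : eqType) (R : nmodType) (s1 s2 : seq T) (F : T -> R) :
  uniq s1 -> uniq s2 -> (forall x, F x != 0 -> (x \in s1) = (x \in s2)) ->
  \sum_(x <- s1) F x = \sum_(x <- s2) F x.
Proof.
move=> u1 u2 E.
have nz s : \sum_(x <- s) F x = \sum_(x <- filter (fun x => F x != 0) s) F x.
  by rewrite big_filter [RHS]big_mkcond; apply: eq_bigr => x _; case: (F x =P 0) => [->|].
rewrite nz [RHS]nz; apply/perm_big/uniq_perm; rewrite ?filter_uniq //.
by move=> x; rewrite !mem_filter; case: (boolP (F x != 0)) => //= /E.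
Qed.

Definition itvZ (lo hi : int) : seq int :=
  mkseq (fun i => lo + i%:Z) (if lo <= hi then absz (hi - lo) else 0%N).

Lemma mem_itvZ lo hi x : (x \in itvZ lo hi) = (lo <= x < hi).
Proof.
apply/mapP/idP => [[i]|hx].
  by rewrite mem_iota add0n; case: ifP => h hi0 ->; lia.
exists (absz (x - lo)); last lia.
by rewrite mem_iota add0n; case: ifP; lia.
Qed.

Lemma itvZ_uniq lo hi : uniq (itvZ lo hi).
Proof. by apply: mkseq_uniq => i j /addrI []. Qed.

Lemma big_itvZ (R : nmodType) (lo : int) (m : nat) (F : int -> R) :
  \sum_(x <- itvZ lo (lo + m%:Z)) F x = \sum_(i < m) F (lo + i%:Z).
Proof.
rewrite /itvZ (_ : (if _ then _ else _) = m); last by case: ifP; lia.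
by rewrite /mkseq big_map -{1}(subn0 m) -/(index_iota 0 m) big_mkord.
Qed.

Lemma big_neq0_exists (T : eqType) (R : nmodType) (s : seq T) (F : T -> R) :
  \sum_(x <- s) F x != 0 -> exists2 x, x \in s & F x != 0.
Proof.
case: (boolP (has (fun x => F x != 0) s)) => [/hasP//|/hasPn F0].
by rewrite big1_seq ?eqxx // => x /andP[_ /F0 /negPn /eqP].
Qed.

Lemma int_ind_down (P : int -> Prop) (B : int) :
  (forall j, B <= j -> P j) -> (forall j, (forall y, j < y -> P y) -> P j) ->
  forall j, P j.
Proof.
move=> base step j; have [k hk] : exists k : nat, B - k%:Z <= j.
  by exists (absz (B - j)); lia.
elim: k j hk => [|k IH] j hk; first by apply: base; lia.
by apply: step => y hy; apply: IH; lia.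
Qed.

Lemma int_ind_up (P : int -> Prop) (B : int) :
  (forall j, j <= B -> P j) -> (forall j, (forall y, y < j -> P y) -> P j) ->
  forall j, P j.
Proof.
move=> base step j; rewrite -(opprK j).
apply: (@int_ind_down (fun j => P (- j)) (- B)) => [k hk|k IH].
  by apply: base; lia.
by apply: step => y hy; rewrite -(opprK y); apply: IH; lia.
Qed.

(** * Laurent polynomials over F_2 *)

Lemma coefL_supp f x : coefL f x != 0 ->
  - (lshift f)%:Z <= x < (size (lpoly f))%:Z - (lshift f)%:Z.
Proof.
rewrite /coefL; case: ifP => [h nz|]; last by rewrite eqxx.
suff : (absz (x + (lshift f)%:Z)%R < size (lpoly f))%N by lia.
by rewrite ltnNge; apply: contra nz => /(nth_default 0) ->.
Qed.

Lemma coefL_lmul f g x lo hi :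
  (forall j, coefL f j != 0 -> lo <= j < hi) ->
  coefL (lmul f g) x = \sum_(j <- itvZ lo hi) coefL f j * coefL g (x - j).
Proof.
case: f g => [p s] [q t] S.
rewrite (@big_uniq_supp _ _ _ (itvZ (- s%:Z) (x + t%:Z + 1))) ?itvZ_uniq //; last first.
  move=> j; rewrite mulf_eq0 negb_or => /andP[/[dup] /S h1 /coefL_supp h2 /coefL_supp h3].
  by rewrite !mem_itvZ; move: h1 h2 h3 => /=; lia.
case: (leP 0 (x + (s + t)%N%:Z)) => hx; last first.
  rewrite {1}/coefL /= ifF; last lia.
  by rewrite big1_seq // => j /andP[_]; rewrite mem_itvZ; lia.
rewrite (_ : x + t%:Z + 1 = - s%:Z + (absz (x + (s + t)%N%:Z)).+1%:Z); last lia.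
rewrite big_itvZ {1}/coefL /= ifT // coefM; apply: eq_bigr => [[i lti]] _ /=.
rewrite /coefL /= !ifT; try lia; congr (_ `_ _ * _ `_ _); lia.
Qed.

Lemma coefL_lmul_single h p x j : (forall y, y != j -> coefL h y * coefL p (x - y) = 0) ->
  coefL (lmul h p) x = coefL h j * coefL p (x - j).
Proof.
move=> h0; have hS := @coefL_supp h.
rewrite (coefL_lmul _ _ hS) (@big_uniq_supp _ _ _ [:: j]) ?itvZ_uniq ?big_seq1 //.
move=> y nz; rewrite inE mem_itvZ; have e : y = j.
  by apply/eqP; apply: contraNT nz => /h0 ->.
by subst y; rewrite eqxx; apply: hS; move: nz; rewrite mulf_eq0 negb_or => /andP[].
Qed.

Lemma coefL_lmul_top h p j d :
  (forall y, j < y -> coefL h y = 0) -> (forall y, coefL p y != 0 -> y <= d) ->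
  coefL (lmul h p) (j + d) = coefL h j * coefL p d.
Proof.
move=> hh hp; rewrite (@coefL_lmul_single _ _ _ j) ?(addrC j) ?addrK // => y ne.
case: (ltgtP y j) => [lt|gt|eq]; last by rewrite eq eqxx in ne.
  by rewrite [coefL p _](_ : _ = 0) ?mulr0 //; apply/eqP/negPn/negP => /hp; lia.
by rewrite hh ?mul0r.
Qed.

Lemma coefL_lmul_bot h p j d :
  (forall y, y < j -> coefL h y = 0) -> (forall y, coefL p y != 0 -> d <= y) ->
  coefL (lmul h p) (j + d) = coefL h j * coefL p d.
Proof.
move=> hh hp; rewrite (@coefL_lmul_single _ _ _ j) ?(addrC j) ?addrK // => y ne.
case: (ltgtP y j) => [lt|gt|eq]; last by rewrite eq eqxx in ne.
  by rewrite hh ?mul0r.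
by rewrite [coefL p _](_ : _ = 0) ?mulr0 //; apply/eqP/negPn/negP => /hp; lia.
Qed.

Definition laurentX (z : int) (p : {poly 'F_2}) : laurent :=
  if 0 <= z then Laurent (p * 'X^(absz z)) 0 else Laurent p (absz z).

Lemma coefL_laurentX z p x :
  coefL (laurentX z p) x = if 0 <= x - z then p`_(absz (x - z)) else 0.
Proof.
rewrite /laurentX /coefL; case: (boolP (0 <= z)) => hz /=.
  rewrite addr0; case: (boolP (0 <= x)) => hx; last by rewrite ifF //; lia.
  rewrite coefMXn; case: ifP => h; first by rewrite ifF //; lia.
  by rewrite ifT; [congr (_ `_ _)|]; lia.
by rewrite (_ : x + _ = x - z) //; lia.
Qed.

Lemma coefL_translate j f x : coefL (lmul (laurentX j 1) f) x = coefL f (x - j).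
Proof.
rewrite (@coefL_lmul_single _ _ _ j) ?coefL_laurentX ?subrr ?coefC //= ?mul1r //.
move=> y ne; rewrite coefL_laurentX; case: ifP => h; last by rewrite mul0r.
by rewrite coefC ifF ?mul0r //; lia.
Qed.

Definition restrA (c : int) (f : laurent) : laurent :=
  Laurent (\poly_(k < size (lpoly f))
             (if k%:Z - (lshift f)%:Z < c then (lpoly f)`_k else 0)) (lshift f).

Lemma coefL_restrA c f x : coefL (restrA c f) x = if x < c then coefL f x else 0.
Proof.
rewrite /coefL /restrA /=; case: ifP => h; last by case: ifP.
rewrite coef_poly; case: ifP => h2.
  by rewrite (_ : _ - _ < c = (x < c)) //; lia.
by case: ifP => // _; rewrite nth_default //; lia.
Qed.

Lemma coefL_mulXn p s k x : 0 <= x + s%:Z + k%:Z ->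
  coefL (Laurent p s) x = (p * 'X^k)`_(absz (x + s%:Z + k%:Z)).
Proof.
move=> h; rewrite /coefL /= coefMXn; case: ifP => h1.
  by rewrite ifF; [congr (_ `_ _)|]; lia.
by rewrite ifT //; lia.
Qed.

Lemma leqLP p s q t : leq_L (Laurent p s) (Laurent q t) <-> p * 'X^t = q * 'X^s.
Proof.
split=> [E|E x].
  apply/polyP => i; have := E (i%:Z - s%:Z - t%:Z).
  rewrite (@coefL_mulXn p _ t) ?(@coefL_mulXn q _ s); try lia.
  by congr (_ `_ _ = _ `_ _); lia.
case: (boolP (0 <= x + s%:Z + t%:Z)) => h.
  rewrite (@coefL_mulXn p _ t) // (@coefL_mulXn q _ s); last lia.
  by rewrite E; congr (_ `_ _); lia.
by rewrite /coefL /= !ifF //; lia.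
Qed.

Definition ladd (f g : laurent) : laurent :=
  Laurent (lpoly f * 'X^(lshift g) + lpoly g * 'X^(lshift f)) (lshift f + lshift g).

Lemma coefL_ladd f g x : coefL (ladd f g) x = coefL f x + coefL g x.
Proof.
case: f g => [p s] [q t]; case: (boolP (0 <= x + s%:Z + t%:Z)) => h.
  rewrite /ladd (@coefL_mulXn _ _ 0) ?(@coefL_mulXn p _ t) ?(@coefL_mulXn q _ s) /=; try lia.
  by rewrite expr0 mulr1 coefD; congr (_ `_ _ + _ `_ _); lia.
by rewrite /coefL /= !ifF ?addr0 //; lia.
Qed.

Lemma coefL_lmulDl f g p x :
  coefL (lmul (ladd f g) p) x = coefL (lmul f p) x + coefL (lmul g p) x.
Proof.
rewrite -coefL_ladd; move: x; apply/leqLP.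
by case: f g p => [a s] [b t] [q u] /=; rewrite !exprD; ring.
Qed.

Lemma lcoprime_bezout f g : lcoprime f g ->
  exists P Q K, leq_L (ladd (lmul P f) (lmul Q g)) (Laurent 'X^K 0).
Proof.
case: f g => [pf sf] [pg sg] cop; set d := gcdp pf pg.
have [[pG sG] /leqLP /=] : lunit (Laurent d 0).
  apply: cop; [exists (Laurent (pf %/ d) sf)|exists (Laurent (pg %/ d) sg)];
  by apply/leqLP; rewrite /= add0n (mulrC d) divpK ?dvdp_gcdl ?dvdp_gcdr.
rewrite expr0 mulr1 mul1r add0n => dG.
have [[u1 u2] /= /eqpP [[c1 c2] /= /andP[/F2_neq0 c1E /F2_neq0 c2E]]] := Bezoutp pf pg.
rewrite c1E c2E !scale1r => bez.
exists (Laurent (u1 * pG * 'X^sf) 0), (Laurent (u2 * pG * 'X^sg) 0), sG.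
by apply/leqLP => /=; rewrite !add0n expr0 mulr1 -dG /d -bez !exprD; ring.
Qed.

(* If P f + Q g = u^K, the common quotient is h = (a P + b Q) u^-K. *)
Lemma lcoprime_cross f g a b : lcoprime f g -> leq_L (lmul a g) (lmul b f) ->
  exists h, leq_L (lmul h f) a /\ leq_L (lmul h g) b.
Proof.
move=> /lcoprime_bezout [P [Q [K]]].
case: a b f g P Q => [A s] [B t] [F u] [G v] [PP p] [QQ q] /leqLP /= bez /leqLP /= E.
exists (lmul (ladd (lmul (Laurent A s) (Laurent PP p)) (lmul (Laurent B t) (Laurent QQ q)))
          (Laurent 1 K)).
rewrite expr0 mulr1 !exprD in bez; rewrite !exprD in E.
move/eqP: E; rewrite -subr_eq0 => /eqP E; move/eqP: bez; rewrite -subr_eq0 => /eqP bez.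
have Xn_neq0 k : ('X^k : {poly 'F_2}) != 0 by rewrite expf_neq0 ?polyX_eq0.
split; apply/leqLP => /=; rewrite !exprD.
- apply: (@mulIf _ 'X^v); first exact: Xn_neq0.
  apply/eqP; rewrite -subr_eq0; apply/eqP.
  transitivity ((A * G * ('X^t * 'X^u) - B * F * ('X^s * 'X^v)) * (- QQ * 'X^s * 'X^p)
    + (PP * F * ('X^q * 'X^v) + QQ * G * ('X^p * 'X^u) -
       'X^K * ('X^p * 'X^u * ('X^q * 'X^v))) * (A * 'X^s * 'X^t)); first by ring.
  by rewrite E bez !mul0r addr0.
- apply: (@mulIf _ 'X^u); first exact: Xn_neq0.
  apply/eqP; rewrite -subr_eq0; apply/eqP.
  transitivity ((A * G * ('X^t * 'X^u) - B * F * ('X^s * 'X^v)) * (PP * 'X^t * 'X^q)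
    + (PP * F * ('X^q * 'X^v) + QQ * G * ('X^p * 'X^u) -
       'X^K * ('X^p * 'X^u * ('X^q * 'X^v))) * (B * 'X^s * 'X^t)); first by ring.
  by rewrite E bez !mul0r addr0.
Qed.

(** * The commutation form restricted to a half-chain *)

Definition symp_at (eta zeta : label) (x : int) : 'F_2 :=
  coefL eta.1 x * coefL zeta.2 x + coefL eta.2 x * coefL zeta.1 x.

Definition eqlab (eta eta' : label) : Prop := leq_L eta.1 eta'.1 /\ leq_L eta.2 eta'.2.

Lemma symp_at_nonid eta zeta x : symp_at eta zeta x != 0 -> nonid eta x.
Proof.
move=> nz; case: (eqVneq (coefL eta.1 x) 0) => [e1|]; last by left.
by right; apply: contraNneq nz => e2; rewrite /symp_at e1 e2 !mul0r addr0.
Qed.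

Lemma nonid_ge eta x : nonid eta x -> - (maxn (lshift eta.1) (lshift eta.2))%:Z <= x.
Proof. by case=> /coefL_supp; lia. Qed.

Lemma sigmaAE c eta zeta lo : (forall x, nonid eta x -> lo <= x) ->
  sigmaA c eta zeta = \sum_(x <- itvZ lo c) symp_at eta zeta x.
Proof.
move=> hlo.
pose M := maxn (maxn (lshift eta.1) (lshift eta.2)) (maxn (lshift zeta.1) (lshift zeta.2)).
have -> : sigmaA c eta zeta = \sum_(x <- itvZ (- M%:Z) c) symp_at eta zeta x.
  rewrite /sigmaA /= -/M; case: ifP => hc; last first.
    by rewrite big_ord0 big1_seq // => x /andP[_]; rewrite mem_itvZ; lia.
  rewrite (_ : itvZ _ c = itvZ (- M%:Z) (- M%:Z + (absz (c + M%:Z))%:Z)); last first.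
    by congr itvZ; lia.
  by rewrite big_itvZ; apply: eq_bigr => i _; rewrite /symp_at (addrC (- M%:Z)).
apply: big_uniq_supp; rewrite ?itvZ_uniq // => x /symp_at_nonid nz.
have := hlo x nz; have := nonid_ge nz; rewrite !mem_itvZ -/M; lia.
Qed.

Lemma sigmaA_sym c eta zeta : sigmaA c eta zeta = sigmaA c zeta eta.
Proof.
set M := (maxn (lshift eta.1) (lshift eta.2) + maxn (lshift zeta.1) (lshift zeta.2))%N.
rewrite !(@sigmaAE _ _ _ (- M%:Z)) => [|x /nonid_ge|x /nonid_ge]; try lia.
by apply: eq_bigr => x _; rewrite /symp_at addrC mulrC [X in _ + X]mulrC.
Qed.

Lemma sigmaA_self c eta : sigmaA c eta eta = 0.
Proof.
rewrite (sigmaAE _ _ (@nonid_ge eta)) big1 // => x _.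
by rewrite /symp_at [X in _ + X]mulrC F2_addrr.
Qed.

Lemma sigmaA_eqlab c eta eta' zeta zeta' : eqlab eta eta' -> eqlab zeta zeta' ->
  sigmaA c eta zeta = sigmaA c eta' zeta'.
Proof.
move=> [E1 E2] [F1 F2].
have ge' x : nonid eta' x -> - (maxn (lshift eta.1) (lshift eta.2))%:Z <= x.
  by rewrite /nonid -E1 -E2 => /nonid_ge.
rewrite (sigmaAE _ _ (@nonid_ge eta)) (sigmaAE _ _ ge').
by apply: eq_bigr => x _; rewrite /symp_at E1 E2 F1 F2.
Qed.

(** * Alternating forms and hyperbolic pairs *)

Definition form (R : comRingType) (d : nat) (M : 'M[R]_d) (u w : 'rV[R]_d) : R :=
  (u *m M *m w^T) 0 0.

Lemma form_mxE (R : comRingType) m p d (A : 'M[R]_(m, d)) (B : 'M[R]_(p, d)) M i j :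
  (A *m M *m B^T) i j = form M (row i A) (row j B).
Proof. by rewrite /form -row_mul !mxE; apply: eq_bigr => k _; rewrite !mxE. Qed.

Lemma formDl (R : comRingType) d (M : 'M[R]_d) u v w :
  form M (u + v) w = form M u w + form M v w.
Proof. by rewrite /form !mulmxDl mxE. Qed.

Lemma formZl (R : comRingType) d (M : 'M[R]_d) a u w : form M (a *: u) w = a * form M u w.
Proof. by rewrite /form -!scalemxAl mxE. Qed.

Lemma formE (R : comRingType) d (M : 'M[R]_d) u w :
  form M u w = \sum_i \sum_j u 0 i * w 0 j * M i j.
Proof.
rewrite /form mxE exchange_big; apply: eq_bigr => j _.
by rewrite !mxE big_distrl; apply: eq_bigr => i _; rewrite mulrAC.
Qed.

Lemma hyperbolic_rank (F : fieldType) k d (M : 'M[F]_d) (e z : 'I_k -> 'rV_d) :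
  (forall i j, form M (e i) (z j) = (i == j)%:R) ->
  (forall i j, form M (z i) (e j) = (i == j)%:R) ->
  (forall i j, form M (e i) (e j) = 0) -> (forall i j, form M (z i) (z j) = 0) ->
  (k + k <= d)%N.
Proof.
move=> ez ze ee zz; pose X := col_mx (\matrix_i e i) (\matrix_i z i).
pose J : 'M[F]_(k + k) := block_mx 0 1%:M 1%:M 0.
have XMX : X *m M *m X^T = J.
  rewrite tr_col_mx mul_col_mx mul_col_row /J.
  by congr block_mx; apply/matrixP => i j; rewrite form_mxE !rowK ?ez ?ze ?ee ?zz ?mxE.
have J_unit : J \in unitmx.
  have JJ : J *m J = 1%:M.
    by rewrite mulmx_block !mul0mx !mulmx0 !mul1mx !add0r !addr0 -scalar_mx_block.
  by case: (mulmx1_unit JJ).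
have := mxrankM_maxl (X *m M) X^T; rewrite XMX mxrank_unit //.
by move/leq_trans; apply; apply: leq_trans (mxrankM_maxl X M) (rank_leq_col X).
Qed.

Section SymplecticBasis.
Variables (V : lmodType 'F_2) (b : V -> V -> 'F_2).
Hypotheses (bDl : forall x y z, b (x + y) z = b x z + b y z)
           (bZl : forall a x z, b (a *: x) z = a * b x z)
           (bC : forall x y, b x y = b y x)
           (b_alt : forall x, b x x = 0).

Lemma bDr x y z : b z (x + y) = b z x + b z y.
Proof. by rewrite bC bDl !(bC z). Qed.

Lemma bZr a x z : b z (a *: x) = a * b z x.
Proof. by rewrite bC bZl bC. Qed.

Definition lcomb (s : seq nat) (v : nat -> V) (cf : nat -> 'F_2) : V :=
  \sum_(i <- s) cf i *: v i.

Lemma b_lcomb s v cf z : b (lcomb s v cf) z = \sum_(i <- s) cf i * b (v i) z.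
Proof.
rewrite /lcomb; elim: s => [|i s IH]; last by rewrite !big_cons bDl bZl IH.
by rewrite !big_nil -(scale0r 0) bZl mul0r.
Qed.

Definition nondeg (s : seq nat) (v : nat -> V) : Prop :=
  forall cf, (forall i, i \in s -> b (lcomb s v cf) (v i) = 0) ->
  forall i, i \in s -> cf i = 0.

Fixpoint hyperbolic (ps : seq (V * V)) : Prop :=
  if ps is p :: ps' then
    [/\ b p.1 p.2 = 1,
        (forall q, q \in ps' ->
           [/\ b p.1 q.1 = 0, b p.1 q.2 = 0, b p.2 q.1 = 0 & b p.2 q.2 = 0])
      & hyperbolic ps']
  else True.

Lemma hyperbolic_nth ps i j : hyperbolic ps -> (i < size ps)%N -> (j < size ps)%N ->
  [/\ b (nth (0, 0) ps i).1 (nth (0, 0) ps j).2 = (i == j)%:R,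
      b (nth (0, 0) ps i).1 (nth (0, 0) ps j).1 = 0
    & b (nth (0, 0) ps i).2 (nth (0, 0) ps j).2 = 0].
Proof.
elim: ps i j => [|p ps IH] //= [|i] [|j] [p12 orth hps] //= ilt jlt.
- by have [? ? ? ?] := orth _ (mem_nth (0, 0) jlt).
- by have [? ? ? ?] := orth _ (mem_nth (0, 0) ilt); split; rewrite bC.
- by rewrite eqSS; apply: IH.
Qed.

Lemma nondeg_partner i0 s v : i0 \notin s -> nondeg (i0 :: s) v ->
  exists2 i1, i1 \in s & b (v i0) (v i1) = 1.
Proof.
move=> ni0 hN.
case: (boolP (has (fun i1 => b (v i0) (v i1) != 0) s)) => [/hasP[i1 ? /F2_neq0]|/hasPn H].
  by exists i1.
have comb0 : lcomb (i0 :: s) v (fun i => (i == i0)%:R) = v i0.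
  rewrite /lcomb big_cons eqxx scale1r big_seq big1 ?addr0 // => j js.
  have /negbTE -> : j != i0 by apply: contraNneq ni0 => <-.
  by rewrite scale0r.
suff : (i0 == i0)%:R = 0 :> 'F_2 by rewrite eqxx => /eqP; rewrite oner_eq0.
apply: (hN (fun i => (i == i0)%:R) _ i0 (mem_head _ _)) => i.
by rewrite comb0 inE => /orP[/eqP ->|/H /negPn /eqP //]; exact: b_alt.
Qed.

(* For [b w w' = 1], the projection onto the orthogonal complement of <w, w'>. *)
Definition sproj (w w' x : V) : V := x + b x w' *: w + b x w *: w'.

Lemma sproj_orth w w' x : b w w' = 1 -> b (sproj w w' x) w = 0 /\ b (sproj w w' x) w' = 0.
Proof.
move=> ww'; rewrite /sproj !bDl !bZl !b_alt (bC w' w) ww' !mulr0 !mulr1 addr0.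
by rewrite F2_addrr -addrA (addrC _ 0) add0r F2_addrr.
Qed.

Lemma b_sproj w w' x y : b y w = 0 -> b y w' = 0 -> b y (sproj w w' x) = b y x.
Proof. by move=> yw yw'; rewrite /sproj !bDr !bZr yw yw' !mulr0 !addr0. Qed.

Lemma nondeg_sproj i0 i1 s v : i0 \notin s -> uniq s -> i1 \in s ->
  b (v i0) (v i1) = 1 -> nondeg (i0 :: s) v ->
  nondeg (filter (predC1 i1) s) (sproj (v i0) (v i1) \o v).
Proof.
move=> ni0 us si1 ww' hN cf' orth.
set rest := filter _ s in orth *; pose y := lcomb rest (sproj (v i0) (v i1) \o v) cf'.
have [yw yw'] : b y (v i0) = 0 /\ b y (v i1) = 0.
  rewrite !b_lcomb; split; apply: big1 => i _ /=.
    by have [-> _] := sproj_orth (v i) ww'; rewrite mulr0.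
  by have [_ ->] := sproj_orth (v i) ww'; rewrite mulr0.
pose al := \sum_(i <- rest) cf' i * b (v i) (v i1).
pose be := \sum_(i <- rest) cf' i * b (v i) (v i0).
pose cf i := if i == i0 then al else if i == i1 then be else cf' i.
have restE : \sum_(i <- s | i != i1) cf i *: v i = lcomb rest v cf'.
  rewrite -big_filter /lcomb !big_seq; apply: eq_bigr => i.
  rewrite mem_filter => /andP[/= ni1 si]; rewrite /cf (negbTE ni1).
  by have /negbTE -> : i != i0 by apply: contraNneq ni0 => <-.
have yE : y = lcomb (i0 :: s) v cf.
  rewrite /lcomb big_cons (bigD1_seq i1) //= restE /cf eqxx.
  have /negbTE -> : i1 != i0 by apply: contraNneq ni0 => <-.
  rewrite eqxx /y /lcomb /al /be !scaler_suml -!big_split /=.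
  by apply: eq_bigr => i _; rewrite /sproj !scalerDr !scalerA -addrA addrC -addrA.
have cf0 j : j \in i0 :: s -> cf j = 0.
  apply: hN => {}j; rewrite -yE inE => /orP[/eqP ->//|sj].
  case: (eqVneq j i1) => [->//|nj1].
  by rewrite -(b_sproj _ yw yw') orth // mem_filter /= nj1.
move=> i; rewrite mem_filter => /andP[/= ni1 si]; have := cf0 i.
rewrite inE si orbT /cf (negbTE ni1) => /(_ isT).
by have /negbTE -> : i != i0 by apply: contraNneq ni0 => <-.
Qed.

Lemma symplectic_family s v : uniq s -> nondeg s v ->
  exists ps, [/\ (size ps).*2 = size s, hyperbolic ps &
    forall x, (forall i, i \in s -> b x (v i) = 0) ->
    forall p, p \in ps -> b x p.1 = 0 /\ b x p.2 = 0].
Proof.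
move: {2}(size s) (leqnn (size s)) => m; elim: m s v => [|m IH] [|i0 s] v //= sm.
- by exists [::].
- by exists [::].
move=> /andP[ni0 us] hN; have [i1 si1 ww'] := nondeg_partner ni0 hN.
set rest := filter (predC1 i1) s.
have size_rest : size rest = (size s).-1 by rewrite /rest -rem_filter // size_rem.
have [|ps [sps hps orth]] :=
  IH rest (sproj (v i0) (v i1) \o v) _ (filter_uniq _ us) (nondeg_sproj ni0 us si1 ww' hN).
  by rewrite size_rest; move: sm => /=; lia.
have [p0 p1] : (forall i, i \in rest -> b (v i0) ((sproj (v i0) (v i1) \o v) i) = 0) /\
               (forall i, i \in rest -> b (v i1) ((sproj (v i0) (v i1) \o v) i) = 0).
  by split=> i _ /=; rewrite bC; have [] := sproj_orth (v i) ww'.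
exists ((v i0, v i1) :: ps); split => /=.
- have : (0 < size s)%N by case: (s) si1.
  by rewrite doubleS sps size_rest; case: (size s).
- split=> // q qps; have [? ?] := orth _ p0 _ qps; have [? ?] := orth _ p1 _ qps.
  by split.
- move=> x xs p; rewrite inE => /orP[/eqP -> /=|pps].
    by split; apply: xs; rewrite inE ?eqxx ?si1 ?orbT.
  apply: orth pps => i; rewrite mem_filter => /andP[_ si] /=.
  by rewrite (b_sproj _ (xs _ (mem_head _ _))) ?xs // inE ?si ?si1 ?orbT.
Qed.

End SymplecticBasis.

Definition unit_row d (i : nat) : 'rV['F_2]_d := \row_(j < d) ((j : nat) == i)%:R.

Lemma nondeg_unit_rows d (M : 'M['F_2]_d) : (forall u : 'rV_d, u *m M = 0 -> u = 0) ->
  nondeg (form M) (iota 0 d) (@unit_row d).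
Proof.
move=> M_nondeg cf orth; pose u : 'rV_d := \row_j cf j.
have uE : lcomb (iota 0 d) (@unit_row d) cf = u.
  apply/rowP => j; rewrite /lcomb summxE !mxE.
  rewrite (bigD1_seq (nat_of_ord j)) ?mem_iota ?iota_uniq //= !mxE eqxx mulr1.
  by rewrite big1 ?addr0 // => i ij; rewrite !mxE eq_sym (negbTE ij) mulr0.
have /M_nondeg u0 : u *m M = 0.
  apply/rowP => k; have := orth k; rewrite mem_iota add0n ltn_ord uE /form mxE.
  move=> /(_ isT) h0; rewrite [RHS]mxE -h0 (bigD1 k) //= big1 ?addr0.
    by rewrite [X in _ * X]mxE [X in _ * X]mxE eqxx mulr1.
  move=> i ik; rewrite [X in _ * X]mxE [X in _ * X]mxE.
  by rewrite (negbTE ik : (i : nat) == k = false) mulr0.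
move=> i; rewrite mem_iota add0n => ilt.
by have := congr1 (fun N : 'rV_d => N 0 (Ordinal ilt)) u0; rewrite !mxE.
Qed.

(** * Stabilizer groups with a palindromic generator *)

Definition scaleL (f : laurent) (xi : label) : label := (lmul f xi.1, lmul f xi.2).

Definition translate (j : int) (xi : label) : label := scaleL (laurentX j 1) xi.

Section PalindromicStabilizer.
Variables (xi : label) (n : nat) (c : int).
Hypothesis xi_supp : forall x, nonid xi x -> - n%:Z <= x <= n%:Z.
Hypothesis xi_top : nonid xi n%:Z.
Hypotheses (xi1_pal : palindrome xi.1) (xi2_pal : palindrome xi.2).

Lemma xi1_supp x : coefL xi.1 x != 0 -> - n%:Z <= x <= n%:Z.
Proof. by move=> nz; apply: xi_supp; left. Qed.

Lemma xi2_supp x : coefL xi.2 x != 0 -> - n%:Z <= x <= n%:Z.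
Proof. by move=> nz; apply: xi_supp; right. Qed.

Lemma xi_top_cancel a : a * coefL xi.1 n%:Z = 0 -> a * coefL xi.2 n%:Z = 0 -> a = 0.
Proof.
by case: xi_top => nz /eqP e1 /eqP e2; apply/eqP; [move: e1|move: e2];
  rewrite mulf_eq0 (negbTE nz) orbF.
Qed.

(* The top coefficient of h meets the top coefficient of xi, which is nonzero. *)
Lemma scaleL_top_supp h :
  (forall x, c <= x -> coefL (lmul h xi.1) x = 0 /\ coefL (lmul h xi.2) x = 0) ->
  forall j, c - n%:Z <= j -> coefL h j = 0.
Proof.
move=> hB; apply: (@int_ind_down _ ((size (lpoly h))%:Z - (lshift h)%:Z)) => [j hj _|j IH hj].
  by apply/eqP/negPn/negP => /coefL_supp; lia.
have h_gt y : j < y -> coefL h y = 0 by move=> jy; apply: IH => //; lia.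
have e1 : coefL (lmul h xi.1) (j + n%:Z) = coefL h j * coefL xi.1 n%:Z.
  by apply: coefL_lmul_top => // y /xi1_supp; lia.
have e2 : coefL (lmul h xi.2) (j + n%:Z) = coefL h j * coefL xi.2 n%:Z.
  by apply: coefL_lmul_top => // y /xi2_supp; lia.
have /hB[] : c <= j + n%:Z by lia.
by rewrite e1 e2; exact: xi_top_cancel.
Qed.

Lemma scaleL_bot_supp h :
  (forall x, x < c -> coefL (lmul h xi.1) x = 0 /\ coefL (lmul h xi.2) x = 0) ->
  forall j, j < c + n%:Z -> coefL h j = 0.
Proof.
move=> hA; apply: (@int_ind_up _ (- (lshift h)%:Z - 1)) => [j hj _|j IH hj].
  by apply/eqP/negPn/negP => /coefL_supp; lia.
have h_lt y : y < j -> coefL h y = 0 by move=> yj; apply: IH => //; lia.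
have e1 : coefL (lmul h xi.1) (j + - n%:Z) = coefL h j * coefL xi.1 n%:Z.
  by rewrite xi1_pal; apply: coefL_lmul_bot => // y /xi1_supp; lia.
have e2 : coefL (lmul h xi.2) (j + - n%:Z) = coefL h j * coefL xi.2 n%:Z.
  by rewrite xi2_pal; apply: coefL_lmul_bot => // y /xi2_supp; lia.
have /hA[] : j + - n%:Z < c by lia.
by rewrite e1 e2; exact: xi_top_cancel.
Qed.

Definition gram (j k : int) : 'F_2 := sigmaA c (translate j xi) (translate k xi).

Lemma translate_supp j x : nonid (translate j xi) x -> j - n%:Z <= x <= j + n%:Z.
Proof. by rewrite /nonid /= !coefL_translate => /xi_supp; lia. Qed.

(* By palindromy, x |-> j + k - x exchanges the two terms of the symplectic product. *)
Lemma translates_commute j k :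
  \sum_(x <- itvZ (j - n%:Z) (j + n%:Z + 1)) symp_at (translate j xi) (translate k xi) x = 0.
Proof.
pose A x := coefL xi.1 (x - j) * coefL xi.2 (x - k).
pose r x := j + k - x.
have rK : involutive r by move=> x; rewrite /r; lia.
have sympE x : symp_at (translate j xi) (translate k xi) x = A x + A (r x).
  rewrite /symp_at /= !coefL_translate /A (xi1_pal (r x - j)) (xi2_pal (r x - k)).
  by congr (_ + _); rewrite mulrC; congr (coefL _ _ * coefL _ _); rewrite /r; lia.
rewrite (eq_bigr _ (fun x _ => sympE x)) big_split /=.
suff -> : \sum_(x <- itvZ (j - n%:Z) (j + n%:Z + 1)) A (r x) =
          \sum_(x <- itvZ (j - n%:Z) (j + n%:Z + 1)) A x by rewrite F2_addrr.
transitivity (\sum_(x <- map r (itvZ (j - n%:Z) (j + n%:Z + 1))) A x).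
  by rewrite [RHS]big_map.
apply: big_uniq_supp.
- by rewrite map_inj_uniq ?itvZ_uniq //; exact: inv_inj.
- exact: itvZ_uniq.
move=> x; rewrite /A mulf_eq0 negb_or => /andP[/xi1_supp h1 /xi2_supp h2].
by rewrite -{1}(rK x) (mem_map (inv_inj rK)) !mem_itvZ /r; lia.
Qed.

(* A translate by j < c - n lies in A, where all translates commute; one by
   j >= c + n does not meet A. *)
Lemma gram_out j k : ~~ (c - n%:Z <= j < c + n%:Z) -> gram j k = 0.
Proof.
have lo_ok x : nonid (translate j xi) x -> j - n%:Z <= x by move/translate_supp; lia.
move=> jout; case: (ltP j (c - n%:Z)) => jlo.
  rewrite /gram (sigmaAE _ _ lo_ok) -[RHS](translates_commute j k).
  apply: big_uniq_supp; rewrite ?itvZ_uniq // => x /symp_at_nonid /translate_supp.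
  by rewrite !mem_itvZ; lia.
have c_ok x : nonid (translate j xi) x -> c <= x by move/translate_supp; move: jout; lia.
by rewrite /gram (sigmaAE _ _ c_ok) big1_seq // => x /andP[_]; rewrite mem_itvZ; lia.
Qed.

Lemma gram_sym j k : gram j k = gram k j.
Proof. exact: sigmaA_sym. Qed.

Lemma gram_neq0 j k : gram j k != 0 ->
  (c - n%:Z <= j < c + n%:Z) && (c - n%:Z <= k < c + n%:Z).
Proof.
move=> nz; apply/andP; split; apply: contraNT nz => out; first by rewrite gram_out.
by rewrite gram_sym gram_out.
Qed.

Lemma scaleL_supp f lo hi x : (forall j, coefL f j != 0 -> lo <= j < hi) ->
  nonid (scaleL f xi) x -> lo - n%:Z <= x < hi + n%:Z.
Proof.
move=> hf; have key p : (forall y, coefL p y != 0 -> - n%:Z <= y <= n%:Z) ->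
    coefL (lmul f p) x != 0 -> lo - n%:Z <= x < hi + n%:Z.
  move=> hp; rewrite (coefL_lmul _ _ hf) => /big_neq0_exists [j].
  by rewrite mem_itvZ mulf_eq0 negb_or => jr /andP[_ /hp]; lia.
by case=> /key; apply; [exact: xi1_supp|exact: xi2_supp].
Qed.

Lemma sigmaA_scaleL f g lo hi :
  (forall j, coefL f j != 0 -> lo <= j < hi) -> (forall j, coefL g j != 0 -> lo <= j < hi) ->
  sigmaA c (scaleL f xi) (scaleL g xi) =
  \sum_(j <- itvZ lo hi) \sum_(k <- itvZ lo hi) coefL f j * coefL g k * gram j k.
Proof.
move=> hf hg.
have lo_f x : nonid (scaleL f xi) x -> lo - n%:Z <= x by move/(scaleL_supp hf); lia.
rewrite (sigmaAE _ _ lo_f).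
transitivity (\sum_(x <- itvZ (lo - n%:Z) c) \sum_(j <- itvZ lo hi) \sum_(k <- itvZ lo hi)
    coefL f j * coefL g k * symp_at (translate j xi) (translate k xi) x).
  apply: eq_bigr => x _; rewrite /symp_at /=.
  rewrite (coefL_lmul xi.1 _ hf) (coefL_lmul xi.2 _ hf).
  rewrite (coefL_lmul xi.1 _ hg) (coefL_lmul xi.2 _ hg).
  rewrite !big_distrl -big_split; apply: eq_bigr => j _.
  rewrite !big_distrr -big_split; apply: eq_bigr => k _ /=.
  by rewrite !coefL_translate; ring.
rewrite exchange_big big_seq [RHS]big_seq; apply: eq_bigr => j; rewrite mem_itvZ => jr.
rewrite exchange_big; apply: eq_bigr => k _; rewrite /gram (@sigmaAE _ _ _ (lo - n%:Z)).
  by rewrite big_distrr.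
by move=> x /translate_supp; lia.
Qed.

(* Only the translates by [c - n <= j < c + n] straddle the cut. *)
Definition site (i : 'I_(n + n)) : int := c - n%:Z + i%:Z.

Definition window (f : laurent) : 'rV['F_2]_(n + n) := \row_i coefL f (site i).

Definition gramM : 'M['F_2]_(n + n) := \matrix_(i, i') gram (site i) (site i').

Lemma sigmaA_window f g :
  sigmaA c (scaleL f xi) (scaleL g xi) = form gramM (window f) (window g).
Proof.
pose lo := - (lshift f + lshift g)%N%:Z.
pose hi := (size (lpoly f) + size (lpoly g))%N%:Z.
have hf j : coefL f j != 0 -> lo <= j < hi by move/coefL_supp; lia.
have hg j : coefL g j != 0 -> lo <= j < hi by move/coefL_supp; lia.
rewrite (sigmaA_scaleL hf hg) formE.
rewrite (@big_uniq_supp _ _ _ (itvZ (c - n%:Z) (c - n%:Z + (n + n)%N%:Z))) ?itvZ_uniq //.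
  rewrite big_itvZ; apply: eq_bigr => i _.
  rewrite (@big_uniq_supp _ _ _ (itvZ (c - n%:Z) (c - n%:Z + (n + n)%N%:Z))) ?itvZ_uniq //.
    by rewrite big_itvZ; apply: eq_bigr => i' _; rewrite !mxE.
  move=> k; rewrite !mulf_eq0 !negb_or => /andP[/andP[_ /hg gk] /gram_neq0 /andP[_ kw]].
  by rewrite !mem_itvZ; lia.
move=> j /big_neq0_exists [k _]; rewrite !mulf_eq0 !negb_or.
move=> /andP[/andP[/hf fj _] /gram_neq0 /andP[jw _]].
by rewrite !mem_itvZ; lia.
Qed.

Definition lift_window (u : 'rV['F_2]_(n + n)) : laurent :=
  laurentX (c - n%:Z) (\poly_(i < n + n) if insub i is Some j then u 0 j else 0).

Lemma lift_windowK u : window (lift_window u) = u.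
Proof.
apply/rowP => i; rewrite mxE coefL_laurentX /site.
rewrite (_ : c - n%:Z + i%:Z - (c - n%:Z) = i%:Z); last lia.
by rewrite lez_nat coef_poly ltn_ord valK.
Qed.

Lemma window_supp_A g : supp_in_A c (scaleL g xi) -> window g = 0.
Proof.
move=> gA; apply/rowP => i; rewrite !mxE; apply: scaleL_top_supp.
  move=> x cx; have nA : ~ nonid (scaleL g xi) x by move/gA; rewrite ltNge cx.
  by split; apply/eqP/negPn/negP => nz; apply: nA; [left|right].
by rewrite /site; lia.
Qed.

Lemma sigmaA_supp_A f theta g : eqlab theta (scaleL g xi) -> supp_in_A c theta ->
  sigmaA c (scaleL f xi) theta = 0.
Proof.
move=> [E1 E2] thA; rewrite (@sigmaA_eqlab _ _ (scaleL f xi) _ (scaleL g xi)) //.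
rewrite sigmaA_window (@window_supp_A g) => [|x gx].
  by rewrite /form trmx0 mulmx0 mxE.
by apply: thA; move: gx; rewrite /nonid E1 E2.
Qed.

Lemma restrA_cross eta : (forall k, sigmaA c eta (translate k xi) = 0) ->
  leq_L (lmul (restrA c eta.1) xi.2) (lmul (restrA c eta.2) xi.1).
Proof.
move=> orth k; have := orth k.
set lo := - (maxn (lshift eta.1) (lshift eta.2))%:Z.
have r_supp p : (lshift p <= maxn (lshift eta.1) (lshift eta.2))%N ->
    forall j, coefL (restrA c p) j != 0 -> lo <= j < c.
  move=> hp j; rewrite coefL_restrA; case: ifP => jc; last by rewrite eqxx.
  by move/coefL_supp; lia.
rewrite (sigmaAE _ _ (@nonid_ge eta)) -/lo big_split /= => /F2_addr_eq0 e.
rewrite (coefL_lmul _ _ (r_supp _ (leq_maxl _ _))) (coefL_lmul _ _ (r_supp _ (leq_maxr _ _))).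
have restrE p q x : x \in itvZ lo c -> palindrome q ->
    coefL (restrA c p) x * coefL q (k - x) = coefL p x * coefL q (x - k).
  by rewrite mem_itvZ => /andP[_ xc] qpal; rewrite coefL_restrA xc qpal opprB.
rewrite (eq_big_seq _ (fun x xr => restrE _ _ _ xr xi2_pal)).
rewrite [RHS](eq_big_seq _ (fun x xr => restrE _ _ _ xr xi1_pal)).
by move: e; rewrite /symp_at /= !(eq_bigr _ (fun x _ => congr1 _ (coefL_translate _ _ _))).
Qed.

Lemma supp_both_scaleL f g : sigmaA c (scaleL f xi) (scaleL g xi) = 1 ->
  supp_both c (scaleL f xi).
Proof.
move=> fg1; split.
  have : sigmaA c (scaleL f xi) (scaleL g xi) != 0 by rewrite fg1 oner_eq0.
  rewrite (sigmaAE _ _ (@nonid_ge _)) => /big_neq0_exists [x].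
  by rewrite mem_itvZ => /andP[_ xc] /symp_at_nonid; exists x.
pose hi := (size (lpoly f))%:Z - (lshift f)%:Z + n%:Z.
have f_hi x : nonid (scaleL f xi) x -> x < hi by move/(scaleL_supp (@coefL_supp f)); lia.
pose nonidb x := (coefL (lmul f xi.1) x != 0) || (coefL (lmul f xi.2) x != 0).
case: (boolP (has nonidb (itvZ c hi))) => [/hasP [y]|/hasPn noB].
  by rewrite mem_itvZ => /andP[cy _] /orP nz; exists y; split.
suff : sigmaA c (scaleL g xi) (scaleL f xi) = 0.
  by rewrite sigmaA_sym fg1 => /eqP; rewrite oner_eq0.
apply: (@sigmaA_supp_A _ _ f); first by split.
move=> x nzx; case: (ltP x c) => // cx; exfalso.
have /noB : x \in itvZ c hi by rewrite mem_itvZ cx f_hi.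
by case: nzx => nz; rewrite /nonidb nz ?orbT.
Qed.

Lemma bell_family_le k (eta zeta : 'I_k -> label) :
  bell_family xi c eta zeta -> (k <= n)%N.
Proof.
case=> inS_xi _ diag offdiag _.
have [F hF] : exists F : 'I_k -> laurent, forall i, eqlab (eta i) (scaleL (F i) xi).
  apply: (@fin_all_exists _ (fun _ => laurent) (fun i f => eqlab _ (scaleL f xi))) => i.
  by have [[f ?] _] := inS_xi i; exists f.
have [G hG] : exists G : 'I_k -> laurent, forall i, eqlab (zeta i) (scaleL (G i) xi).
  apply: (@fin_all_exists _ (fun _ => laurent) (fun i f => eqlab _ (scaleL f xi))) => i.
  by have [_ [f ?]] := inS_xi i; exists f.
have window_formE a b eta' zeta' : eqlab eta' (scaleL a xi) -> eqlab zeta' (scaleL b xi) ->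
    form gramM (window a) (window b) = sigmaA c eta' zeta'.
  by move=> Ea Eb; rewrite -sigmaA_window; symmetry; apply: sigmaA_eqlab.
suff : (k + k <= n + n)%N by lia.
apply: (@hyperbolic_rank _ _ _ gramM (fun i => window (F i)) (fun i => window (G i))) => i j.
- rewrite (window_formE _ _ _ _ (hF i) (hG j)); case: (eqVneq i j) => [->|ne].
    by rewrite diag.
  by have [] := offdiag i j ne.
- rewrite (window_formE _ _ _ _ (hG i) (hF j)) sigmaA_sym eq_sym; case: (eqVneq j i) => [->|ne].
    by rewrite diag.
  by have [] := offdiag j i ne.
- rewrite (window_formE _ _ _ _ (hF i) (hF j)); case: (eqVneq i j) => [->|ne].
    exact: sigmaA_self.
  by have [] := offdiag i j ne.
- rewrite (window_formE _ _ _ _ (hG i) (hG j)); case: (eqVneq i j) => [->|ne].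
    exact: sigmaA_self.
  by have [] := offdiag i j ne.
Qed.

Hypothesis xi_coprime : lcoprime xi.1 xi.2.

(* A kernel vector gives G such that W(G xi) commutes on A with all of S.  The A-part a
   of G xi then satisfies a_+ xi_- = a_- xi_+, so a = h xi by coprimality: h vanishes
   from the window on, as h xi lives in A, and G - h vanishes below the end of the
   window, as (G - h) xi lives in B. *)
Lemma gramM_nondeg (u : 'rV_(n + n)) : u *m gramM = 0 -> u = 0.
Proof.
move=> uM0; set G := lift_window u.
have orth g : sigmaA c (scaleL G xi) (scaleL g xi) = 0.
  by rewrite sigmaA_window lift_windowK /form uM0 mul0mx mxE.
have [h [hG1 hG2]] := lcoprime_cross xi_coprime (restrA_cross (fun k => orth (laurentX k 1))).
have h_top : forall j, c - n%:Z <= j -> coefL h j = 0.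
  by apply: scaleL_top_supp => x cx; rewrite hG1 hG2 !coefL_restrA ltNge cx.
have Gh_bot : forall j, j < c + n%:Z -> coefL (ladd G h) j = 0.
  apply: scaleL_bot_supp => x xc.
  by rewrite !coefL_lmulDl hG1 hG2 !coefL_restrA xc !F2_addrr.
apply/rowP => i; rewrite -(lift_windowK u) -/G !mxE.
have [lo_i hi_i] : c - n%:Z <= site i /\ site i < c + n%:Z.
  by rewrite /site; have := ltn_ord i; lia.
by have := Gh_bot _ hi_i; rewrite coefL_ladd h_top ?addr0.
Qed.

Lemma bell_family_exists : exists eta zeta : 'I_n -> label, bell_family xi c eta zeta.
Proof.
pose b := form gramM.
have sigmaE u w : sigmaA c (scaleL (lift_window u) xi) (scaleL (lift_window w) xi) = b u w.
  by rewrite sigmaA_window !lift_windowK.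
have bC x y : b x y = b y x by rewrite -!sigmaE sigmaA_sym.
have b_alt x : b x x = 0 by rewrite -sigmaE sigmaA_self.
have [ps [sps hps _]] := symplectic_family (@formDl _ _ gramM) (@formZl _ _ gramM) bC b_alt
  (iota_uniq 0 (n + n)) (nondeg_unit_rows gramM_nondeg).
have size_ps : size ps = n by move: sps; rewrite size_iota -addnn; lia.
pose e (i : 'I_n) := (nth (0, 0) ps i).1; pose z (i : 'I_n) := (nth (0, 0) ps i).2.
have hyp i j : [/\ b (e i) (z j) = (i == j)%:R, b (e i) (e j) = 0 & b (z i) (z j) = 0].
  by apply: hyperbolic_nth; rewrite ?size_ps.
exists (fun i => scaleL (lift_window (e i)) xi), (fun i => scaleL (lift_window (z i)) xi).
split.
- by move=> i; split; [exists (lift_window (e i))|exists (lift_window (z i))].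
- move=> i; have [ez _ _] := hyp i i; rewrite eqxx in ez.
  by split; [apply: (supp_both_scaleL (g := lift_window (z i)))
            |apply: (supp_both_scaleL (g := lift_window (e i)))]; rewrite sigmaE // bC.
- by move=> i; rewrite sigmaE; have [-> _ _] := hyp i i; rewrite eqxx.
- by move=> i j ij; rewrite !sigmaE; have [-> -> ->] := hyp i j; rewrite (negbTE ij).
- by move=> i theta [g hg] thA; split; apply: sigmaA_supp_A hg thA.
Qed.

End PalindromicStabilizer.

Lemma has_length_palindrome xi n : palindrome xi.1 -> palindrome xi.2 ->
  has_length xi (2 * n + 1)%N ->
  (forall x, nonid xi x -> - n%:Z <= x <= n%:Z) /\ nonid xi n%:Z.
Proof.
move=> xi1_pal xi2_pal [lo [hi [nlo nhi bounds len]]].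
have refl x : nonid xi x -> nonid xi (- x) by rewrite /nonid -xi1_pal -xi2_pal.
have := bounds _ (refl _ nlo); have := bounds _ (refl _ nhi) => h1 h2.
have -> : n%:Z = hi by move: len h1 h2; lia.
by split => // x /bounds; move: len h1 h2; lia.
Qed.

Theorem mainTheorem14 (xi : label) (n : nat) :
  palindrome xi.1 -> palindrome xi.2 -> lcoprime xi.1 xi.2 ->
  has_length xi (2 * n + 1)%N ->
  forall c : int, entanglement_is xi c n.
Proof.
move=> xi1_pal xi2_pal xi_coprime xi_len c.
have [xi_supp xi_top] := has_length_palindrome xi1_pal xi2_pal xi_len.
split; first exact: bell_family_exists.
by move=> k eta zeta; apply: bell_family_le.
Qed.
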